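(* A linear code $C\subseteq\mathbb{F}_3^n$ is trifferent if and only if it is minimal.
   Context: A linear code $C\subseteq\mathbb{F}_3^n$ is trifferent if for any three distinct $x,y,z\in C$ there is a coordinate $i$ with $\{x_i,y_i,z_i\}=\mathbb{F}_3$. The support of $v$ is $\mathrm{supp}(v)=\{i: v_i\ne 0\}$. A linear code $C$ is minimal if for all $u,v\in C$, $\mathrm{supp}(u)\subsetneq\mathrm{supp}(v)$ implies $u=0$ (equivalently, every nonzero codeword has inclusion-minimal support among nonzero codewords). *)

From HB Require Import structures.
From mathcomp Require Import all_boot all_order all_algebra.
Set Implicit Arguments. Unset Strict Implicit. Unset Printing Implicit Defensive.
Import GRing.Theory.
Local Open Scope ring_scope.

Definition supp (n : nat) (v : 'rV['F_3]_n) : {set 'I_n} :=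
  [set i | v 0 i != 0].

Definition trifferent (n : nat) (C : {vspace 'rV['F_3]_n}) : Prop :=
  forall x y z : 'rV['F_3]_n, x \in C -> y \in C -> z \in C ->
    x != y -> y != z -> x != z ->
    exists i : 'I_n, [set x 0 i; y 0 i; z 0 i] = [set: 'F_3].

Definition minimal_code (n : nat) (C : {vspace 'rV['F_3]_n}) : Prop :=
  forall u v : 'rV['F_3]_n, u \in C -> v \in C ->
    supp u \proper supp v -> u = 0.

From mathcomp Require Import all_boot all_order all_algebra.
Set Implicit Arguments. Unset Strict Implicit. Unset Printing Implicit Defensive.
Import GRing.Theory.
Local Open Scope ring_scope.

(* Translating a triple by its third word shows that C is trifferent iff any
   two distinct nonzero codewords a, b have distinct nonzero entries at some
   coordinate, i.e. (over F_3) a_i = -b_i != 0.  If supp u is a proper subset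
   of supp v, the pair (u, v - u) admits no such coordinate, since there
   u_i + (v - u)_i = v_i would vanish; conversely, if a pair (a, b) admits
   none, then supp (a + b) = supp a :|: supp b, minimality forces
   supp a = supp (a + b) = supp b, and a, b, never opposite, then coincide. *)

Lemma set3_eqT (T : finType) (p q r : T) : #|T| = 3%N ->
  ([set p; q; r] == [set: T]) = [&& p != q, q != r & p != r].
Proof.
move=> cardT; rewrite eqEcard subsetT cardsT cardT setUC cardsU1 cards2 !inE.
rewrite negb_or (eq_sym r p) (eq_sym r q).
by case: (p == q); case: (q == r); case: (p == r).
Qed.

Lemma F3_cases (x : 'F_3) : [\/ x = 0, x = 1 | x = 2].
Proof.
case: x => [[|[|[|m]]] //= ?];
  [apply: Or31 | apply: Or32 | apply: Or33]; exact: val_inj.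
Qed.

Lemma F3_neq_addr_eq0 (p q : 'F_3) : p != 0 -> q != 0 -> (p != q) = (p + q == 0).
Proof. by case: (F3_cases p) => ->; case: (F3_cases q) => ->. Qed.

Lemma F3_double_eq0 (p : 'F_3) : (p + p == 0) = (p == 0).
Proof. by case: (F3_cases p) => ->. Qed.

Lemma supp_double (n : nat) (u : 'rV['F_3]_n) : supp (u + u) = supp u.
Proof. by apply/setP => i; rewrite !inE mxE F3_double_eq0. Qed.

Definition opposite_on_common_supp (n : nat) (C : {vspace 'rV['F_3]_n}) : Prop :=
  forall a b : 'rV['F_3]_n, a \in C -> b \in C -> a != 0 -> b != 0 -> a != b ->
    exists i : 'I_n, [&& a 0 i != 0, b 0 i != 0 & a 0 i + b 0 i == 0].

Lemma trifferentE (n : nat) (C : {vspace 'rV['F_3]_n}) :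
  trifferent C <-> opposite_on_common_supp C.
Proof.
split=> [triffC a b aC bC a0 b0 ab | oppC x y z xC yC zC xy yz xz].
  have [i /eqP] := triffC a b 0 aC bC (mem0v C) ab b0 a0.
  rewrite set3_eqT ?card_Fp // mxE => /and3P[abi bi ai].
  by exists i; rewrite ai bi -F3_neq_addr_eq0.
have [|||i] := oppC (x - z) (y - z) (memvB xC zC) (memvB yC zC);
  rewrite ?subr_eq0 ?(can_eq (subrK z)) //.
rewrite !mxE !subr_eq0 => /and3P[xzi yzi].
rewrite -F3_neq_addr_eq0 ?subr_eq0 // (can_eq (subrK _)) => xyi.
by exists i; apply/eqP; rewrite set3_eqT ?card_Fp // xyi yzi xzi.
Qed.

Lemma minimal_code_supp_eq (n : nat) (C : {vspace 'rV['F_3]_n}) (u v : 'rV['F_3]_n) :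
  minimal_code C -> u \in C -> v \in C -> u != 0 ->
  supp u \subset supp v -> supp u = supp v.
Proof.
move=> minC uC vC u0 suv; apply/eqP; apply: contraNT u0 => neq_uv.
by apply/eqP; apply: minC uC vC _; rewrite properEneq neq_uv.
Qed.

Lemma minimal_opposite (n : nat) (C : {vspace 'rV['F_3]_n}) :
  minimal_code C -> opposite_on_common_supp C.
Proof.
move=> minC a b aC bC a0 b0 ab.
suff /existsP[i abi] : [exists i, [&& a 0 i != 0, b 0 i != 0 & a 0 i + b 0 i == 0]].
  by exists i.
apply: contraNT ab => /existsPn never_opp.
have supp_ab : supp (a + b) = supp a :|: supp b.
  apply/setP => i; rewrite !inE mxE; have := never_opp i.
  have [-> _|ai] := eqVneq (a 0 i) 0; first by rewrite add0r.
  by have [->|bi] := eqVneq (b 0 i) 0; rewrite ?addr0 // ai bi.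
have abC : a + b \in C by rewrite memvD.
have sa : supp a = supp (a + b).
  by apply: minimal_code_supp_eq minC aC abC a0 _; rewrite supp_ab subsetUl.
have sb : supp b = supp (a + b).
  by apply: minimal_code_supp_eq minC bC abC b0 _; rewrite supp_ab subsetUr.
apply/eqP/rowP => j; have /setP/(_ j) := etrans sa (esym sb); rewrite !inE.
have [-> /esym/negbFE/eqP -> //|aj] := eqVneq (a 0 j) 0.
rewrite /= => /esym bj; apply/eqP.
by have := never_opp j; rewrite aj bj -F3_neq_addr_eq0 // negbK.
Qed.

Lemma opposite_minimal (n : nat) (C : {vspace 'rV['F_3]_n}) :
  opposite_on_common_supp C -> minimal_code C.
Proof.
move=> oppC u v uC vC; rewrite properEneq => /andP[neq_uv suv].
apply/eqP; apply: contraT => u0.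
have vu0 : v - u != 0 by rewrite subr_eq0; apply: contraNneq neq_uv => ->.
have u_vu : u != v - u.
  by apply: contraNneq neq_uv => /esym/(canRL (subrK u)) ->; rewrite supp_double.
have [i /and3P[ui _]] := oppC u (v - u) uC (memvB vC uC) u0 vu0 u_vu.
rewrite !mxE subrKC => /eqP vi.
by move: (subsetP suv i); rewrite !inE ui vi eqxx => /(_ isT).
Qed.

Theorem theorem6p2 (n : nat) (C : {vspace 'rV['F_3]_n}) :
  trifferent C <-> minimal_code C.
Proof.
apply: iff_trans (trifferentE C) _.
by split; [exact: opposite_minimal | exact: minimal_opposite].
Qed.
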